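(* Let $f=\frac1n\sum_{i=1}^n f_i$ with each $f_i:\mathbb{R}^d\to\mathbb{R}$ twice continuously differentiable, and suppose there are constants $0<\mu<L$ such that for all $i$ and all $x,\hat x\in\mathbb{R}^d$, $$\mu\|x-\hat x\|^2\le (\nabla f_i(x)-\nabla f_i(\hat x))^\top(x-\hat x)\le L\|x-\hat x\|^2 .$$ Let $x^*$ be the minimizer of $f$ and $\kappa=L/\mu$. Consider the asynchronous L-DQN iteration described in the context, with a constant stepsize $\eta_t=\eta$, and suppose there are constants $0<\epsilon_d<\epsilon_u$ such that for all $i=1,\dots,n$, all $t>0$ and all $x\in\mathbb{R}^d$, $$\epsilon_d I_d\preceq (\tilde B_i^t)^{-1/2}\nabla^2 f_i(x)(\tilde B_i^t)^{-1/2}\preceq \epsilon_u I_d .$$ Suppose the ratio $\epsilon:=\epsilon_u/\epsilon_d$ satisfies $$\epsilon<\frac12\left[1+\frac1\kappa+\sqrt{\Big(1+\frac1\kappa\Big)^2+\frac4\kappa}\right],$$ and that the stepsize satisfies $\eta\in\Big(\frac{1}{\epsilon_d}\big[1-\frac{1}{\epsilon\kappa}\big],\ \frac{2}{\epsilon_d+\epsilon_u}\Big)$. Then the iterates converge linearly over epochs: there exists $\rho<1$ such that for every $m\in\mathbb{N}^+$ and every $t\in[E_m,E_{m+1})$, $$\|x^{t+1}-x^*\|\le \rho^{m}\|x^0-x^*\|.$$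
   Context: Setting (master/worker, asynchronous): a master holds the iterate $x^t\in\mathbb{R}^d$ at time $t=0,1,2,\dots$; at each time $t$ one worker $i_t\in\{1,\dots,n\}$ communicates with the master. For worker $i$ and time $t$, $d_i^t\ge 0$ denotes the delay, i.e. the last exchange between the master and worker $i$ took place at time $t-d_i^t$, and $D_i^t:=d_i^t+d_i^{t-d_i^t-1}+1$ denotes the double delay, i.e. the exchange before that took place at time $t-D_i^t$. Each worker $i$ holds a local copy $z_i^t$ of the iterate it last received from the master (so $z_i^t=z_i^{t-d_i^t}$ is an earlier master iterate) and a symmetric positive definite matrix $\tilde B_i^t=\tilde B_i^{t-d_i^t}$ (its Hessian approximation of $f_i$, which in L-DQN is produced by limited-memory BFGS updates with memory $m$ and scaling $\gamma_i=\|y_i\|^2/(y_i^\top s_i)$, $s_i=x-z_i$, $y_i=\nabla f_i(x)-\nabla f_i(z_i)$; only the spectral hypothesis in the claim is used about these matrices). Initially $z_i^0=x^0$. The master update is $$x^{t+1}=\big(\tilde B^t\big)^{-1}\Big[\sum_{i=1}^n \tilde B_i^t z_i^t-\eta_t\sum_{i=1}^n\nabla f_i(z_i^t)\Big],\qquad \tilde B^t:=\sum_{i=1}^n\tilde B_i^t .$$ Epochs: $E_1=0$ and $E_{m+1}=\min\{t:\ t-D_i^t\ge E_m \text{ for all } i=1,\dots,n\}$, i.e. $E_{m+1}$ is the first time $t$ such that every worker has made at least two updates in $[E_m,t]$. $I_d$ is the $d\times d$ identity, $\preceq$ the Loewner order, $\|\cdot\|$ the Euclidean norm. *)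

From HB Require Import structures.
From mathcomp Require Import all_boot all_order all_algebra.
From mathcomp Require Import all_classical all_reals all_analysis.

Set Implicit Arguments.
Unset Strict Implicit.
Unset Printing Implicit Defensive.

Import Order.TTheory GRing.Theory Num.Theory.
Import numFieldNormedType.Exports.
Local Open Scope ring_scope.

Section LinAlg.
Variable R : realType.

Definition vdot d (u v : 'cV[R]_d) : R := (u^T *m v) 0 0.
Definition enorm d (v : 'cV[R]_d) : R := Num.sqrt (vdot v v).

Definition qform d (A : 'M[R]_d) (v : 'cV[R]_d) : R := (v^T *m A *m v) 0 0.
Definition loewner_le d (A B : 'M[R]_d) : Prop := forall v, qform A v <= qform B v.
Definition sym_posdef d (A : 'M[R]_d) : Prop :=
  A^T = A /\ forall v, v != 0 -> 0 < qform A v.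

Definition is_inv_sqrt d (A S : 'M[R]_d) : Prop := sym_posdef S /\ S *m S = invmx A.

Definition twice_cont_diff d (f : 'cV[R]_d -> R) (g : 'cV[R]_d -> 'cV[R]_d)
    (H : 'cV[R]_d -> 'M[R]_d) : Prop :=
  (forall x, differentiable f x /\ forall h, 'd f x h = vdot (g x) h) /\
  (forall x, differentiable g x /\ forall h, 'd g x h = H x *m h) /\
  continuous H.

Definition avgf n d (f : 'I_n -> 'cV[R]_d -> R) (y : 'cV[R]_d) : R :=
  (n%:R)^-1 * \sum_(i < n) f i y.

End LinAlg.

Section Async.
Local Open Scope nat_scope.
Variable n : nat.
(* sched t = i_t, the worker that communicates with the master at time t *)
Implicit Types (sched : nat -> 'I_n) (i : 'I_n) (t : nat).

Fixpoint lastex sched i t : option nat :=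
  match t with
  | 0 => if sched 0 == i then Some 0 else None
  | t'.+1 => if sched t'.+1 == i then Some t'.+1 else lastex sched i t'
  end.

(* delay d_i^t : last exchange at time t - d_i^t (None: no exchange yet) *)
Definition delay sched i t : option nat := omap (fun s => t - s) (lastex sched i t).

(* double delay D_i^t := d_i^t + d_i^{t - d_i^t - 1} + 1 *)
Definition ddelay sched i t : option nat :=
  match delay sched i t with
  | Some dt =>
      match t - dt with
      | 0 => None
      | k.+1 => omap (fun d' => dt + d' + 1) (delay sched i k)
      end
  | None => None
  end.

(* index of the master iterate at which the information of worker i that the
   master uses at time t was computed: x^{t - D_i^t + 1} (the iterate sent to
   worker i at its second-to-last exchange), or x^0 if worker i has not yet
   exchanged twice. *)
Definition info_time sched i t : nat :=
  match ddelay sched i t with Some D => (t - D).+1 | None => 0 end.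

(* every worker made at least two updates in [e, t], i.e. t - D_i^t >= e *)
Definition two_updates_since sched e t : Prop :=
  forall i, exists D, ddelay sched i t = Some D /\ (e <= t - D)%N.

(* epoch_start sched m e  <->  E_m = e  (E_1 = 0, E_{m+1} = min{t | t - D_i^t >= E_m forall i}) *)
Inductive epoch_start sched : nat -> nat -> Prop :=
| epoch_start1 : epoch_start sched 1 0
| epoch_startS m e t : epoch_start sched m e -> two_updates_since sched e t ->
    (forall s, (s < t)%N -> ~ two_updates_since sched e s) ->
    epoch_start sched m.+1 t.

(* t is in [E_m, E_{m+1})  (E_{m+1} = +infinity if the minimum does not exist) *)
Definition in_epoch sched m t : Prop :=
  exists e, epoch_start sched m e /\ (e <= t)%N /\
    forall s, (s <= t)%N -> ~ two_updates_since sched e s.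

End Async.

Section Master.
Variables (R : realType) (n d : nat).

Definition zloc (sched : nat -> 'I_n) (x : nat -> 'cV[R]_d) (i : 'I_n) (t : nat) : 'cV[R]_d :=
  x (info_time sched i t).

Definition ldqn_master_updates (sched : nat -> 'I_n) (x : nat -> 'cV[R]_d)
    (B : 'I_n -> nat -> 'M[R]_d) (grad : 'I_n -> 'cV[R]_d -> 'cV[R]_d) (eta : R) : Prop :=
  forall t, x t.+1 = invmx (\sum_(i < n) B i t) *m
      (\sum_(i < n) B i t *m zloc sched x i t - eta *: \sum_(i < n) grad i (zloc sched x i t)).

End Master.

From HB Require Import structures.
From mathcomp Require Import all_boot all_order all_algebra.
From mathcomp Require Import all_classical all_reals all_analysis.
From mathcomp Require Import ring lra zify.

Set Implicit Arguments.
Unset Strict Implicit.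
Unset Printing Implicit Defensive.

Import Order.TTheory GRing.Theory Num.Theory.
Import numFieldNormedType.Exports.
Local Open Scope ring_scope.

(* With S = (B_i^t)^(-1/2), the Hessian bounds say eps_d B_i^t <= hess f_i <= eps_u B_i^t,
   so by Taylor's theorem each f_i is eps_d-strongly convex and eps_u-smooth for the norm
   |v|_B = sqrt (v^T B_i^t v).  In that geometry co-coercivity of the gradient makes the
   preconditioned gradient step a contraction: writing e = z - xstar,
     |B e - eta (grad f_i z - grad f_i xstar)|_(B^-1) <= (1 - eta eps_d) |e|_B.
   The gradients of the f_i sum to zero at xstar, so (sum_i B_i) (x^(t+1) - xstar) is the
   sum of these vectors over the workers, with z = z_i^t.  Young's inequality for the dual
   norms and mu/eps_u <= B_i <= L/eps_d (from the monotonicity bounds on the gradients) give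
     |x^(t+1) - xstar| <= rho max_i |z_i^t - xstar|,   rho = (1 - eta eps_d) eps kappa < 1.
   Every z_i^t used at a time t >= E_(m+1) was sent to worker i after E_m, so the error
   bound gains a factor rho in each epoch. *)

Section InnerProduct.
Context {R : realType} {d : nat}.
Implicit Types (u v w : 'cV[R]_d) (A C S : 'M[R]_d).

Lemma vdotE u v : vdot u v = \sum_j u j 0 * v j 0.
Proof. by rewrite /vdot mxE; apply: eq_bigr => j _; rewrite mxE. Qed.

Lemma vdotC u v : vdot u v = vdot v u.
Proof. by rewrite !vdotE; apply: eq_bigr => j _; rewrite mulrC. Qed.

Lemma vdotDl u v w : vdot (u + v) w = vdot u w + vdot v w.
Proof. by rewrite !vdotE -big_split; apply: eq_bigr => j _; rewrite mxE mulrDl. Qed.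

Lemma vdotZl (a : R) u v : vdot (a *: u) v = a * vdot u v.
Proof. by rewrite !vdotE mulr_sumr; apply: eq_bigr => j _; rewrite mxE mulrA. Qed.

Lemma vdotNl u v : vdot (- u) v = - vdot u v.
Proof. by rewrite -scaleN1r vdotZl mulN1r. Qed.

Lemma vdotBl u v w : vdot (u - v) w = vdot u w - vdot v w.
Proof. by rewrite vdotDl vdotNl. Qed.

Lemma vdotDr u v w : vdot w (u + v) = vdot w u + vdot w v.
Proof. by rewrite vdotC vdotDl !(vdotC w). Qed.

Lemma vdotZr (a : R) u v : vdot v (a *: u) = a * vdot v u.
Proof. by rewrite vdotC vdotZl vdotC. Qed.

Lemma vdotNr u v : vdot v (- u) = - vdot v u.
Proof. by rewrite vdotC vdotNl vdotC. Qed.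

Lemma vdot_suml I (r : seq I) (P : pred I) (F : I -> 'cV[R]_d) v :
  vdot (\sum_(i <- r | P i) F i) v = \sum_(i <- r | P i) vdot (F i) v.
Proof.
elim/big_rec2: _ => [|i y1 y2 _ <-]; last by rewrite vdotDl.
by rewrite vdotE big1 // => j _; rewrite mxE mul0r.
Qed.

Lemma vdot_mulmxl A u v : vdot (A *m u) v = vdot u (A^T *m v).
Proof. by rewrite /vdot trmx_mul mulmxA. Qed.

Lemma vdot_mulmx_sym A u v : A^T = A -> vdot u (A *m v) = vdot (A *m u) v.
Proof. by move=> As; rewrite vdot_mulmxl As. Qed.

Lemma vdot_ge0 v : 0 <= vdot v v.
Proof. by rewrite vdotE; apply: sumr_ge0 => j _; exact: sqr_ge0. Qed.

Lemma vdot_eq0 v : vdot v v = 0 -> v = 0.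
Proof.
rewrite vdotE => /eqP; rewrite psumr_eq0 => [/allP v0|j _]; last exact: sqr_ge0.
apply/matrixP => j k; rewrite (ord1 k) mxE.
by have := v0 j (mem_index_enum j); rewrite /= mulf_eq0 orbb => /eqP.
Qed.

Lemma enorm_ge0 v : 0 <= enorm v.
Proof. exact: sqrtr_ge0. Qed.

Lemma enorm_sq v : enorm v ^+ 2 = vdot v v.
Proof. by rewrite /enorm sqr_sqrtr // vdot_ge0. Qed.

Lemma qformE A v : qform A v = vdot (A *m v) v.
Proof. by rewrite vdotC /qform /vdot mulmxA. Qed.

Lemma qformZ A (a : R) v : qform A (a *: v) = a * a * qform A v.
Proof. by rewrite !qformE -scalemxAr vdotZl vdotZr mulrA. Qed.

Lemma qformN A v : qform A (- v) = qform A v.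
Proof. by rewrite -scaleN1r qformZ mulrNN !mul1r. Qed.

Lemma qformD A u v : A^T = A ->
  qform A (u + v) = qform A u + 2 * vdot (A *m u) v + qform A v.
Proof.
move=> As; rewrite !qformE mulmxDr !vdotDl !vdotDr (vdotC (A *m v) u).
by rewrite vdot_mulmx_sym //; ring.
Qed.

Lemma qformZmx A (a : R) v : qform (a *: A) v = a * qform A v.
Proof. by rewrite !qformE -scalemxAl vdotZl. Qed.

Lemma qform_suml I (r : seq I) (P : pred I) (A : I -> 'M[R]_d) v :
  qform (\sum_(i <- r | P i) A i) v = \sum_(i <- r | P i) qform (A i) v.
Proof.
by rewrite qformE mulmx_suml vdot_suml; apply: eq_bigr => i _; rewrite qformE.
Qed.

Lemma qform_posdef_unit A : (forall v, v != 0 -> 0 < qform A v) -> A \in unitmx.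
Proof.
move=> Apos; rewrite unitmxE unitfE; apply/negP => /det0P [w w0 wA0].
have := Apos w^T; rewrite trmx_eq0 => /(_ w0).
by rewrite /qform trmxK wA0 mul0mx mxE ltxx.
Qed.

Lemma sym_posdef_unit A : sym_posdef A -> A \in unitmx.
Proof. by case=> _; exact: qform_posdef_unit. Qed.

Lemma sym_posdef_ge0 A v : sym_posdef A -> 0 <= qform A v.
Proof.
case=> _ Apos; have [->|v0] := eqVneq v 0; last exact/ltW/Apos.
by rewrite qformE mulmx0 vdotC vdotE big1 // => j _; rewrite mxE mul0r.
Qed.

Lemma qform_congr S A v : S^T = S -> qform (S *m A *m S) v = qform A (S *m v).
Proof. by move=> Ss; rewrite /qform trmx_mul Ss !mulmxA. Qed.

Lemma loewner_le_congr S A C : S^T = S -> S \in unitmx ->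
  loewner_le (S *m A *m S) (S *m C *m S) -> loewner_le A C.
Proof.
by move=> Ss Su AC v; have := AC (invmx S *m v); rewrite !qform_congr // mulKVmx.
Qed.

Lemma inv_sqrt_unit A S : A \in unitmx -> is_inv_sqrt A S -> S \in unitmx.
Proof.
by move=> Au [_ SS]; move: Au; rewrite -unitmx_inv -SS unitmx_mul => /andP[].
Qed.

Lemma inv_sqrt_congr A S : A \in unitmx -> is_inv_sqrt A S -> S *m A *m S = 1%:M.
Proof.
move=> Au [_ SS].
have SA : S *m A = A *m S.
  rewrite -[S *m A]mul1mx -(mulmxV Au) -SS -!mulmxA.
  by rewrite [S *m (S *m A)]mulmxA SS mulVmx // mulmx1.
by rewrite SA -mulmxA SS mulmxV.
Qed.

Lemma loewner_inv_sqrt A S H (lo hi : R) : A \in unitmx -> is_inv_sqrt A S ->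
  loewner_le lo%:M (S *m H *m S) -> loewner_le (S *m H *m S) hi%:M ->
  forall v, lo * qform A v <= qform H v /\ qform H v <= hi * qform A v.
Proof.
move=> Au AS loH Hhi v.
have [[Ss _] _] := AS; have Su := inv_sqrt_unit Au AS.
have scalar_congr c : c%:M = S *m (c *: A) *m S.
  by rewrite -scalemxAr -scalemxAl inv_sqrt_congr // scalemx1.
rewrite -!qformZmx; split; apply: loewner_le_congr Ss Su _ _.
- by rewrite -scalar_congr.
- by rewrite -scalar_congr.
Qed.

End InnerProduct.

Section Taylor.
Variable R : realType.
Local Open Scope classical_set_scope.

Lemma taylor2_ge (p p1 p2 : R -> R) (lo : R) :
  (forall s, is_derive s (1 : R) p (p1 s)) -> (forall s, is_derive s (1 : R) p1 (p2 s)) ->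
  (forall s : R, lo <= p2 s) -> p 0 + p1 0 + lo / 2 <= p 1.
Proof.
(* q1 is nondecreasing and is the derivative of q: two applications of the mean value
   theorem give q 1 - q 0 = q1 c >= q1 0 *)
move=> dp dp1 lo_p2.
pose q1 s := p1 s - lo * s.
pose q s := p s - lo / 2 * (s * s).
have dq1 (s : R) : is_derive s (1 : R) q1 (p2 s - lo).
  apply: is_derive_eq (is_deriveB (dp1 s) (is_deriveZ lo (is_derive_id s (1 : R)))) _.
  by rewrite /GRing.scale /= mulr1.
have dq (s : R) : is_derive s (1 : R) q (q1 s).
  have ds := is_derive_id s (1 : R).
  apply: is_derive_eq (is_deriveB (dp s) (is_deriveZ (lo / 2) (is_deriveM ds ds))) _.
  by rewrite /q1 /GRing.scale /= !mulr1; field.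
have cont (h dh : R -> R) a b :
    (forall s, is_derive s (1 : R) h (dh s)) -> {within `[a, b], continuous h}.
  by move=> dh_; apply: derivable_within_continuous => s _; exact: ex_derive.
have [c c01 qc] := MVT ltr01 (fun s _ => dq s) (cont _ _ _ _ dq).
have [c0 _] : 0 < c /\ c < 1 by move: c01; rewrite in_itv /= => /andP.
have [c' _ q1c] := MVT c0 (fun s _ => dq1 s) (cont _ _ _ _ dq1).
have : 0 <= (p2 c' - lo) * c by rewrite mulr_ge0 // ?subr_ge0 // ltW.
rewrite /q /q1 !(mul1r, mulr1, mul0r, mulr0, subr0) in qc q1c; lra.
Qed.

Lemma taylor2_le (p p1 p2 : R -> R) (hi : R) :
  (forall s, is_derive s (1 : R) p (p1 s)) -> (forall s, is_derive s (1 : R) p1 (p2 s)) ->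
  (forall s : R, p2 s <= hi) -> p 1 <= p 0 + p1 0 + hi / 2.
Proof.
move=> dp dp1 p2_hi.
have Np2_hi s : - hi <= - p2 s by rewrite lerN2.
have := @taylor2_ge (- p) (- p1) (- p2) (- hi) (fun s => is_deriveN (dp s))
  (fun s => is_deriveN (dp1 s)) Np2_hi.
rewrite !opprfctE mulNr; lra.
Qed.

Lemma is_derive_line (W : normedModType R) d (F : 'cV[R]_d -> W) a v s :
  differentiable F (a + s *: v) ->
  is_derive s 1 (fun u => F (a + u *: v)) ('d F (a + s *: v) v).
Proof.
move=> dF.
have line_diff : is_diff s (fun u : R => a + u *: v) ( *:%R ^~ v).
  have -> : ( *:%R ^~ v) = (0 : R -> 'cV[R]_d) + ( *:%R ^~ v).
    by apply/funext => u /=; rewrite add0r.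
  exact: is_diffD.
have dFline : differentiable (F \o (fun u : R => a + u *: v)) s.
  exact: differentiable_comp.
apply: DeriveDef; first exact: diff_derivable.
by rewrite deriveE // diff_comp // /= diff_val scale1r.
Qed.

Lemma is_derive_vdotl d (G : R -> 'cV[R]_d) (v D : 'cV[R]_d) (s : R) :
  is_derive s (1 : R) G D -> is_derive s (1 : R) (fun u => vdot (G u) v) (vdot D v).
Proof.
move=> dG.
have dGs : derivable G s 1 by exact: ex_derive.
have dcoord k : is_derive s (1 : R) (fun u => G u k 0) (D k 0).
  rewrite -[D]derive_val derive_mx // mxE.
  exact/derivableP/(derivable_mxP _ _ _).1.
have -> : (fun u => vdot (G u) v) = \sum_k (fun u => v k 0 * G u k 0).
  by apply/funext => u; rewrite vdotE fct_sumE; apply: eq_bigr => k _; rewrite mulrC.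
rewrite vdotE.
apply: is_derive_eq (is_derive_sum (fun k => is_deriveZ (v k 0) (dcoord k))) _.
by apply: eq_bigr => k _; rewrite mulrC.
Qed.

Lemma twice_cont_diff_line d f g H (a v : 'cV[R]_d) : twice_cont_diff f g H ->
  (forall s : R, is_derive s (1 : R) (fun u => f (a + u *: v)) (vdot (g (a + s *: v)) v)) /\
  (forall s : R, is_derive s (1 : R) (fun u => vdot (g (a + u *: v)) v)
                                      (qform (H (a + s *: v)) v)).
Proof.
move=> [df [dg _]]; split=> s.
- by rewrite -(df _).2; apply/is_derive_line/(df _).1.
- by rewrite qformE -(dg _).2; apply/is_derive_vdotl/is_derive_line/(dg _).1.
Qed.

Lemma taylor_ge d f g H (lo : R) (a v : 'cV[R]_d) : twice_cont_diff f g H ->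
  (forall y, lo <= qform (H y) v) -> f a + vdot (g a) v + lo / 2 <= f (a + v).
Proof.
move=> /(twice_cont_diff_line a v) [df dg] lo_H.
by have := taylor2_ge df dg (fun s => lo_H _); rewrite /= !scale0r !scale1r !addr0.
Qed.

Lemma taylor_le d f g H (hi : R) (a v : 'cV[R]_d) : twice_cont_diff f g H ->
  (forall y, qform (H y) v <= hi) -> f (a + v) <= f a + vdot (g a) v + hi / 2.
Proof.
move=> /(twice_cont_diff_line a v) [df dg] H_hi.
by have := taylor2_le df dg (fun s => H_hi _); rewrite /= !scale0r !scale1r !addr0.
Qed.

End Taylor.

Section DualNorm.
Context {R : realType} {d : nat}.
Variable B : 'M[R]_d.
Hypotheses (Bsym : B^T = B) (Bunit : B \in unitmx) (Bpsd : forall v, 0 <= qform B v).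

Lemma trmx_invmx_sym : (invmx B)^T = invmx B.
Proof. by rewrite trmx_inv Bsym. Qed.

Lemma qform_mul_invmx v : qform B (invmx B *m v) = qform (invmx B) v.
Proof. by rewrite !qformE mulmxA mulmxV // mul1mx vdotC. Qed.

Lemma qform_invmx_ge0 v : 0 <= qform (invmx B) v.
Proof. by rewrite -qform_mul_invmx. Qed.

Lemma qform_invmx_mulD u w :
  qform (invmx B) (B *m u + w) = qform B u + 2 * vdot w u + qform (invmx B) w.
Proof.
have BiB : invmx B *m (B *m u) = u by rewrite mulKmx.
by rewrite qformD ?trmx_invmx_sym // BiB !qformE BiB vdot_mulmx_sym // (vdotC u w).
Qed.

Lemma vdot_le_qform_dual u w : 2 * vdot w u <= qform B u + qform (invmx B) w.
Proof.
have := qform_invmx_ge0 (B *m u - w).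
by rewrite qform_invmx_mulD qformN vdotNl; lra.
Qed.

Lemma smooth_convex_lower_bound (f : 'cV[R]_d -> R) (g : 'cV[R]_d -> 'cV[R]_d) (Lc : R) :
  0 < Lc ->
  (forall a v, f a + vdot (g a) v <= f (a + v)) ->
  (forall a v, f (a + v) <= f a + vdot (g a) v + Lc / 2 * qform B v) ->
  forall x y, f x + vdot (g x) (y - x) + qform (invmx B) (g y - g x) / (2 * Lc) <= f y.
Proof.
move=> Lc0 f_cvx f_smooth x y.
set G := g y - g x; set v := (- Lc^-1) *: (invmx B *m G).
have := f_cvx x (y + v - x); rewrite subrKC.
have := f_smooth y v.
have step : vdot (g y) v - vdot (g x) v + Lc / 2 * qform B v =
    - (qform (invmx B) G / (2 * Lc)).
  rewrite -vdotBl /v vdotZr qformZ qform_mul_invmx qformE (vdotC G).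
  by field; rewrite gt_eqF.
rewrite [y + v - x]addrAC vdotDr; lra.
Qed.

Variables (f : 'cV[R]_d -> R) (g : 'cV[R]_d -> 'cV[R]_d) (m M : R).
Hypothesis mM : m < M.
Hypothesis f_ge : forall a v, f a + vdot (g a) v + m / 2 * qform B v <= f (a + v).
Hypothesis f_le : forall a v, f (a + v) <= f a + vdot (g a) v + M / 2 * qform B v.

Lemma grad_strongly_monotone x y : m * qform B (y - x) <= vdot (g y - g x) (y - x).
Proof.
have := f_ge x (y - x); have := f_ge y (x - y).
by rewrite !subrKC -[x - y]opprB qformN vdotNr vdotBl; lra.
Qed.

Lemma grad_lipschitz_monotone x y : vdot (g y - g x) (y - x) <= M * qform B (y - x).
Proof.
have := f_le x (y - x); have := f_le y (x - y).
by rewrite !subrKC -[x - y]opprB qformN vdotNr vdotBl; lra.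
Qed.

Lemma grad_cocoercive x y :
  qform (invmx B) (g y - g x) + m * M * qform B (y - x) <=
  (M + m) * vdot (g y - g x) (y - x).
Proof.
(* h = f - m/2 |.|_B^2 is convex and (M - m)-smooth; add its bounds at (x, y) and (y, x) *)
pose h z := f z - m / 2 * qform B z.
pose gh z := g z - m *: (B *m z).
have h_cvx a v : h a + vdot (gh a) v <= h (a + v).
  by have := f_ge a v; rewrite /h /gh qformD // vdotBl vdotZl; lra.
have h_smooth a v : h (a + v) <= h a + vdot (gh a) v + (M - m) / 2 * qform B v.
  by have := f_le a v; rewrite /h /gh qformD // vdotBl vdotZl; lra.
have Mm0 : 0 < M - m by rewrite subr_gt0.
have gh_inc : gh y - gh x = B *m (- m *: (y - x)) + (g y - g x).
  by rewrite /gh -scalemxAr !mulmxBr; apply/matrixP => i j; rewrite !mxE; ring.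
have := smooth_convex_lower_bound Mm0 h_cvx h_smooth x y.
have := smooth_convex_lower_bound Mm0 h_cvx h_smooth y x.
rewrite -[x - y]opprB -[gh x - gh y]opprB qformN vdotNr.
set X := qform (invmx B) (gh y - gh x) => hyx hxy.
have X_le : X / (M - m) <= vdot (gh y - gh x) (y - x).
  have -> : X / (M - m) = X / (2 * (M - m)) + X / (2 * (M - m)).
    by field; rewrite gt_eqF.
  rewrite vdotBl; lra.
move: X_le; rewrite ler_pdivrMr // /X gh_inc qform_invmx_mulD qformZ vdotZr.
rewrite -scalemxAr !vdotDl vdotZl -qformE; lra.
Qed.

Lemma gradient_step_contraction x y (eta : R) : 0 < eta -> eta * (M + m) <= 2 ->
  qform (invmx B) (B *m (y - x) - eta *: (g y - g x)) <=
  (1 - eta * m) ^+ 2 * qform B (y - x).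
Proof.
move=> eta0 eta_le.
have mono := grad_strongly_monotone x y.
have coco := grad_cocoercive x y.
rewrite qform_invmx_mulD qformN qformZ vdotNl vdotZl.
set Q := qform B (y - x) in mono coco *.
set c := vdot (g y - g x) (y - x) in mono coco *.
set P0 := qform (invmx B) (g y - g x) in coco *.
(* the right side minus the left side is 2 eta (c - m Q) - eta^2 (P0 - m^2 Q), and
   co-coercivity bounds P0 - m^2 Q by (M + m) (c - m Q) *)
have P0_le : P0 - m * m * Q <= (M + m) * (c - m * Q) by lra.
have eta_ge0 : 0 <= eta := ltW eta0.
have := ler_wpM2l eta_ge0 (ler_wpM2l eta_ge0 P0_le).
have cmQ : 0 <= c - m * Q by rewrite subr_ge0.
have := ler_wpM2l eta_ge0 (ler_wpM2r cmQ eta_le).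
lra.
Qed.

End DualNorm.

Section Aggregation.
Context {R : realType} {n d : nat}.
Implicit Types (Bs : 'I_n -> 'M[R]_d) (u xs xn : 'cV[R]_d).

Lemma qform_sum_le Bs (ys : 'I_n -> 'cV[R]_d) u :
  (forall i, (Bs i)^T = Bs i) -> (forall i, Bs i \in unitmx) ->
  (forall i v, 0 <= qform (Bs i) v) -> (\sum_i Bs i) *m u = \sum_i ys i ->
  qform (\sum_i Bs i) u <= \sum_i qform (invmx (Bs i)) (ys i).
Proof.
move=> Bsym Bunit Bpsd Bu.
suff : 2 * qform (\sum_i Bs i) u <=
    qform (\sum_i Bs i) u + \sum_i qform (invmx (Bs i)) (ys i) by lra.
rewrite {1}qformE Bu vdot_suml mulr_sumr qform_suml -big_split /=.
by apply: ler_sum => i _; exact: vdot_le_qform_dual.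
Qed.

Lemma master_update_error Bs (z gz gs : 'I_n -> 'cV[R]_d) xs xn (eta : R) :
  (\sum_i Bs i) \in unitmx -> \sum_i gs i = 0 ->
  xn = invmx (\sum_i Bs i) *m (\sum_i Bs i *m z i - eta *: \sum_i gz i) ->
  (\sum_i Bs i) *m (xn - xs) = \sum_i (Bs i *m (z i - xs) - eta *: (gz i - gs i)).
Proof.
move=> Bt_unit gs0 ->.
rewrite mulmxBr mulKVmx // sumrB -scaler_sumr sumrB gs0 subr0 mulmx_suml.
have -> : \sum_i Bs i *m (z i - xs) = \sum_i Bs i *m z i - \sum_i Bs i *m xs.
  by rewrite -sumrB; apply: eq_bigr => i _; rewrite mulmxBr.
by rewrite addrAC.
Qed.

End Aggregation.

Lemma minimizer_grad_eq0 (R : realType) d (F : 'cV[R]_d -> R) (G xs : 'cV[R]_d)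
    (K : R) :
  0 <= K -> (forall v, F (xs + v) <= F xs + vdot G v + K * vdot v v) ->
  (forall y, F xs <= F y) -> G = 0.
Proof.
move=> K0 F_le xs_min; apply: vdot_eq0.
set s := (2 * (K + 1))^-1.
have s0 : 0 < s by rewrite invr_gt0; lra.
have Ks : K * s <= 1 / 2 by rewrite /s ler_pdivrMr; lra.
have g0 := vdot_ge0 G; have sg0 : 0 <= s * vdot G G by rewrite mulr_ge0 // ltW.
have := le_trans (xs_min (xs + (- s) *: G)) (F_le _).
rewrite vdotZr vdotZl vdotZr => descent.
have half : K * s * (s * vdot G G) <= 1 / 2 * (s * vdot G G) by rewrite ler_wpM2r.
have : s * vdot G G <= 0 by lra.
rewrite pmulr_rle0 // => g_le0.
by apply: le_anti; rewrite g_le0 g0.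
Qed.

Section Schedule.
Local Open Scope nat_scope.
Context {n : nat} (sched : nat -> 'I_n) (i : 'I_n).

Lemma lastex_some t s : lastex sched i t = Some s -> sched s = i /\ s <= t.
Proof.
elim: t => [|t IH] /=; first by case: eqP => // <- [<-].
by case: eqP => [<- [<-] //|_ /IH [-> le_st]]; split => //; lia.
Qed.

Lemma lastex_ge t u : sched u = i -> u <= t ->
  exists s, lastex sched i t = Some s /\ u <= s.
Proof.
move=> sched_u; elim: t => [|t IH] /=.
  by rewrite leqn0 => /eqP eu; subst u; rewrite sched_u eqxx; exists 0.
move=> le_ut; case: eqP => [_|ne]; first by exists t.+1.
apply: IH; move: le_ut; rewrite leq_eqVlt => /orP[/eqP eu|//].
by subst u; case: ne.
Qed.

Lemma ddelay_some t D : ddelay sched i t = Some D ->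
  exists k s, [/\ lastex sched i t = Some k.+1, lastex sched i k = Some s & t - D = s].
Proof.
rewrite /ddelay /delay.
case e1: (lastex sched i t) => [s|] //=.
have [_ le_st] := lastex_some e1.
rewrite (_ : t - (t - s) = s); last by lia.
case: s e1 le_st => [|k] // e1 le_kt.
case e2: (lastex sched i k) => [s|] //= [<-].
have [_ le_sk] := lastex_some e2.
by exists k, s; split => //; lia.
Qed.

Lemma info_time_le t : info_time sched i t <= t.
Proof.
rewrite /info_time; case e: (ddelay sched i t) => [D|] //.
have [k [s [e1 e2 e3]]] := ddelay_some e.
by have [_ ?] := lastex_some e1; have [_ ?] := lastex_some e2; lia.
Qed.

Lemma info_time_gt t t' D e : ddelay sched i t = Some D -> e <= t - D -> t <= t' ->
  e < info_time sched i t'.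
Proof.
move=> tD le_e le_tt'.
have [k [s [e1 e2 e3]]] := ddelay_some tD.
have [sched_k le_kt] := lastex_some e1; have [sched_s le_sk] := lastex_some e2.
have [[|k'] [f1 le_kk']] := lastex_ge sched_k (leq_trans le_kt le_tt'); first by lia.
have [_ le_k't'] := lastex_some f1.
have [s' [f2 le_ss']] : exists s', lastex sched i k' = Some s' /\ s <= s'.
  by apply: lastex_ge => //; lia.
rewrite /info_time /ddelay /delay f1 /= (_ : t' - (t' - k'.+1) = k'.+1); last by lia.
by rewrite f2 /=; lia.
Qed.

End Schedule.

Section EpochContraction.
Context {R : realType} {n : nat} (sched : nat -> 'I_n).
Variables (err : nat -> R) (rho : R).
Hypotheses (rho_le1 : rho <= 1) (err0_ge0 : 0 <= err 0%N).
Hypothesis err_step : forall t C,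
  (forall i, err (info_time sched i t) <= C) -> err t.+1 <= rho * C.

Lemma err_le_init t : err t <= err 0%N.
Proof.
elim/ltn_ind: t => -[|t] IH //.
apply: (@le_trans _ _ (rho * err 0%N)); last by rewrite ler_piMl.
by apply: err_step => i; apply: IH; rewrite ltnS info_time_le.
Qed.

Lemma err_epoch_start m e : epoch_start sched m e ->
  forall t, (e <= t)%N -> err t.+1 <= rho ^+ m * err 0%N.
Proof.
elim=> [|{}m e' t' _ IH two_upd _] t le_et.
  by rewrite expr1; apply: err_step => // i; exact: err_le_init.
rewrite exprS -mulrA; apply: err_step => i.
have [D [tD le_e'D]] := two_upd i.
have := info_time_gt tD le_e'D le_et.
by case: (info_time sched i t) => [//|s] lt_e's; exact: IH.
Qed.

Lemma err_in_epoch m t : in_epoch sched m t -> err t.+1 <= rho ^+ m * err 0%N.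
Proof. by case=> e [start [le_et _]]; exact: err_epoch_start start _ le_et. Qed.

End EpochContraction.

Lemma mul_ratio_ge1 (R : realFieldType) (a b c e : R) :
  0 < a -> a <= b -> 0 < c -> c <= e -> 1 <= b / a * (e / c).
Proof. by move=> a_gt0 ab c_gt0 ce; rewrite -[1]mulr1 ler_pM // ler_pdivlMr // mul1r.
Qed.

Lemma stepsize_gt0 (R : realType) (ed w eta : R) : 0 < ed -> 1 <= w ->
  ed^-1 * (1 - w^-1) < eta -> 0 < eta.
Proof.
move=> ed_gt0 w_ge1; apply: le_lt_trans; apply: mulr_ge0; first by rewrite invr_ge0 ltW.
by rewrite subr_ge0 invf_le1 // (lt_le_trans ltr01).
Qed.

Lemma contraction_factor_ge0 (R : realType) (ed eu eta : R) : 0 < eta -> ed < eu ->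
  eta * (eu + ed) <= 2 -> 0 <= 1 - eta * ed.
Proof. by move=> eta_gt0 ed_lt_eu; nra. Qed.

Lemma contraction_factor_lt1 (R : realType) (ed w eta : R) : 0 < ed -> 0 < w ->
  ed^-1 * (1 - w^-1) < eta -> (1 - eta * ed) * w < 1.
Proof.
move=> ed_gt0 w_gt0; rewrite -(ltr_pM2l ed_gt0) mulrA mulfV ?gt_eqF // mul1r.
by rewrite -(ltr_pM2r w_gt0) mulrBl mulVf ?gt_eqF // mulrC; lra.
Qed.

Section LDQN.
Context {R : realType} {d n : nat}.
Variables (f : 'I_n -> 'cV[R]_d -> R) (grad : 'I_n -> 'cV[R]_d -> 'cV[R]_d)
  (hess : 'I_n -> 'cV[R]_d -> 'M[R]_d) (mu L : R) (xstar : 'cV[R]_d)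
  (sched : nat -> 'I_n) (x : nat -> 'cV[R]_d) (B : 'I_n -> nat -> 'M[R]_d)
  (eta eps_d eps_u : R).
Hypothesis f_C2 : forall i, twice_cont_diff (f i) (grad i) (hess i).
Hypotheses (mu_gt0 : 0 < mu) (mu_lt_L : mu < L).
Hypothesis grad_mono : forall i (y yh : 'cV[R]_d),
  mu * enorm (y - yh) ^+ 2 <= vdot (grad i y - grad i yh) (y - yh) /\
  vdot (grad i y - grad i yh) (y - yh) <= L * enorm (y - yh) ^+ 2.
Hypothesis xstar_min : forall y, avgf f xstar <= avgf f y.
Hypothesis B_posdef : forall i t, sym_posdef (B i t).
Hypothesis x_update : ldqn_master_updates sched x B grad eta.
Hypotheses (eps_d_gt0 : 0 < eps_d) (eps_d_lt_u : eps_d < eps_u).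
Hypothesis hess_B : forall i t, exists S, is_inv_sqrt (B i t) S /\
  forall y, loewner_le eps_d%:M (S *m hess i y *m S) /\
            loewner_le (S *m hess i y *m S) eps_u%:M.
Hypotheses (eta_gt0 : 0 < eta) (eta_le : eta * (eps_u + eps_d) <= 2).

Lemma workers_gt0 : (0 < n)%N.
Proof. exact: leq_ltn_trans (leq0n _) (ltn_ord (sched 0%N)). Qed.

Lemma B_sym i t : (B i t)^T = B i t.
Proof. by case: (B_posdef i t). Qed.

Lemma B_unit i t : B i t \in unitmx.
Proof. exact: sym_posdef_unit. Qed.

Lemma B_ge0 i t v : 0 <= qform (B i t) v.
Proof. exact: sym_posdef_ge0. Qed.

Lemma hess_qform_bounds i t y v :
  eps_d * qform (B i t) v <= qform (hess i y) v /\
  qform (hess i y) v <= eps_u * qform (B i t) v.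
Proof.
have [S [BS H_bounds]] := hess_B i t; have [lo hi] := H_bounds y.
exact: loewner_inv_sqrt (B_unit i t) BS lo hi v.
Qed.

Lemma f_lower_quadratic i t a v :
  f i a + vdot (grad i a) v + eps_d / 2 * qform (B i t) v <= f i (a + v).
Proof.
by rewrite mulrAC; apply: taylor_ge (f_C2 i) _ => y; case: (hess_qform_bounds i t y v).
Qed.

Lemma f_upper_quadratic i t a v :
  f i (a + v) <= f i a + vdot (grad i a) v + eps_u / 2 * qform (B i t) v.
Proof.
by rewrite mulrAC; apply: taylor_le (f_C2 i) _ => y; case: (hess_qform_bounds i t y v).
Qed.

Lemma qform_B_ge i t v : mu / eps_u * vdot v v <= qform (B i t) v.
Proof.
have := grad_lipschitz_monotone (f_upper_quadratic i t) 0 v.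
have [mono _] := grad_mono i v 0.
rewrite subr0 enorm_sq in mono * => lip.
by rewrite mulrAC ler_pdivrMr ?(lt_trans eps_d_gt0) //; lra.
Qed.

Lemma qform_B_le i t v : qform (B i t) v <= L / eps_d * vdot v v.
Proof.
have := grad_strongly_monotone (f_lower_quadratic i t) 0 v.
have [_ lip] := grad_mono i v 0.
rewrite subr0 enorm_sq in lip * => mono.
by rewrite mulrAC ler_pdivlMr //; lra.
Qed.

Lemma sum_grad_xstar_eq0 : \sum_i grad i xstar = 0.
Proof.
have L_gt0 : 0 < L := lt_trans mu_gt0 mu_lt_L.
have eps_u_gt0 : 0 < eps_u := lt_trans eps_d_gt0 eps_d_lt_u.
apply: (@minimizer_grad_eq0 _ _ (fun y => \sum_i f i y) _ xstar
  (n%:R * (eps_u / 2 * (L / eps_d)))).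
- by apply: mulr_ge0 => //; apply: mulr_ge0; apply: divr_ge0; rewrite ?ler0n // ltW.
- move=> v; rewrite vdot_suml.
  have -> : n%:R * (eps_u / 2 * (L / eps_d)) * vdot v v =
      \sum_(i < n) eps_u / 2 * (L / eps_d * vdot v v).
    by rewrite sumr_const card_ord -mulr_natl; ring.
  rewrite -!big_split /=; apply: ler_sum => i _.
  apply: le_trans (f_upper_quadratic i 0 xstar v) _.
  by rewrite lerD2l ler_wpM2l ?qform_B_le // divr_ge0 // ltW.
- move=> y; have := xstar_min y.
  by rewrite /avgf ler_pM2l // invr_gt0 ltr0n workers_gt0.
Qed.

Lemma ldqn_step_sq t (C : R) :
  (forall i, enorm (zloc sched x i t - xstar) <= C) ->
  mu / eps_u * vdot (x t.+1 - xstar) (x t.+1 - xstar) <=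
  (1 - eta * eps_d) ^+ 2 * (L / eps_d * C ^+ 2).
Proof.
move=> zC; set u := x t.+1 - xstar; set z := zloc sched x ^~ t.
have nR : (0 : R) < n%:R by rewrite ltr0n workers_gt0.
have sum_const (c : R) : \sum_(i < n) c = n%:R * c.
  by rewrite sumr_const card_ord mulr_natl.
have Bt_ge v : n%:R * (mu / eps_u * vdot v v) <= qform (\sum_i B i t) v.
  by rewrite qform_suml -sum_const; apply: ler_sum => i _; exact: qform_B_ge.
have Bt_unit : (\sum_i B i t) \in unitmx.
  apply: qform_posdef_unit => v v0; apply: lt_le_trans (Bt_ge v).
  have vv_gt0 : 0 < vdot v v.
    by rewrite lt_def vdot_ge0 andbT; apply: contra v0 => /eqP/vdot_eq0 ->.
  by rewrite !mulr_gt0 // invr_gt0 (lt_trans eps_d_gt0).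
have u_eq := master_update_error xstar Bt_unit sum_grad_xstar_eq0 (x_update t).
have contr i : qform (invmx (B i t))
    (B i t *m (z i - xstar) - eta *: (grad i (z i) - grad i xstar)) <=
    (1 - eta * eps_d) ^+ 2 * (L / eps_d * C ^+ 2).
  apply: le_trans (gradient_step_contraction (B_sym i t) (B_unit i t) eps_d_lt_u
    (f_lower_quadratic i t) (f_upper_quadratic i t) xstar (z i) eta_gt0 eta_le) _.
  rewrite ler_wpM2l ?sqr_ge0 //; apply: le_trans (qform_B_le i t _) _.
  apply: ler_wpM2l; first by rewrite divr_ge0 // ltW // (lt_trans mu_gt0).
  have C_ge0 : 0 <= C := le_trans (enorm_ge0 _) (zC i).
  by rewrite -enorm_sq (ler_pXn2r (isT : (0 < 2)%N)) ?nnegrE ?enorm_ge0 ?zC.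
rewrite -(ler_pM2l nR); apply: le_trans (Bt_ge u) _.
apply: le_trans (qform_sum_le (B_sym ^~ t) (B_unit ^~ t) (B_ge0 ^~ t) u_eq) _.
by rewrite -sum_const; apply: ler_sum => i _; exact: contr.
Qed.

Lemma ldqn_step t (C : R) : (forall i, enorm (zloc sched x i t - xstar) <= C) ->
  enorm (x t.+1 - xstar) <= (1 - eta * eps_d) * (eps_u / eps_d * (L / mu)) * C.
Proof.
(* ldqn_step_sq gives the factor r sqrt w, weakened here to r w since w >= 1 *)
move=> zC; have sq := ldqn_step_sq zC.
set r := 1 - eta * eps_d in sq *; set w := eps_u / eps_d * (L / mu).
set u := x t.+1 - xstar in sq *.
have eps_u_gt0 : 0 < eps_u := lt_trans eps_d_gt0 eps_d_lt_u.
have C_ge0 : 0 <= C := le_trans (enorm_ge0 _) (zC (sched 0%N)).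
have w_ge1 : 1 <= w by apply: mul_ratio_ge1; rewrite ?ltW.
have r_ge0 : 0 <= r := contraction_factor_ge0 eta_gt0 eps_d_lt_u eta_le.
have w_ge0 : 0 <= w := le_trans ler01 w_ge1.
have rwC_ge0 : 0 <= r * w * C := mulr_ge0 (mulr_ge0 r_ge0 w_ge0) C_ge0.
rewrite -(ler_pXn2r (isT : (0 < 2)%N)) ?nnegrE ?enorm_ge0 //.
have -> : enorm u ^+ 2 = eps_u / mu * (mu / eps_u * vdot u u).
  by rewrite enorm_sq; field; rewrite !gt_eqF.
apply: le_trans (ler_wpM2l _ sq) _; first by rewrite divr_ge0 ?ltW.
have -> : eps_u / mu * (r ^+ 2 * (L / eps_d * C ^+ 2)) = r ^+ 2 * C ^+ 2 * w.
  by rewrite /w; field; rewrite !gt_eqF.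
have -> : (r * w * C) ^+ 2 = r ^+ 2 * C ^+ 2 * w ^+ 2 by ring.
apply: ler_wpM2l; first exact: mulr_ge0 (sqr_ge0 r) (sqr_ge0 C).
by rewrite expr2 ler_peMr.
Qed.

End LDQN.

Theorem theorem1 (R : realType) (d n : nat)
  (f : 'I_n -> 'cV[R]_d -> R) (grad : 'I_n -> 'cV[R]_d -> 'cV[R]_d)
  (hess : 'I_n -> 'cV[R]_d -> 'M[R]_d)
  (mu L : R) (xstar : 'cV[R]_d)
  (sched : nat -> 'I_n) (x : nat -> 'cV[R]_d) (B : 'I_n -> nat -> 'M[R]_d)
  (eta eps_d eps_u : R) :
  (forall i, twice_cont_diff (f i) (grad i) (hess i)) ->
  0 < mu -> mu < L ->
  (forall i (y yh : 'cV[R]_d),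
      mu * enorm (y - yh) ^+ 2 <= vdot (grad i y - grad i yh) (y - yh) /\
      vdot (grad i y - grad i yh) (y - yh) <= L * enorm (y - yh) ^+ 2) ->
  (forall y, avgf f xstar <= avgf f y) ->
  (forall i t, sym_posdef (B i t)) ->
  (forall i t dt, delay sched i t = Some dt -> B i t = B i (t - dt)%N) ->
  ldqn_master_updates sched x B grad eta ->
  0 < eps_d -> eps_d < eps_u ->
  (forall i t, exists S, is_inv_sqrt (B i t) S /\
      forall y, loewner_le (eps_d%:M) (S *m hess i y *m S) /\
                loewner_le (S *m hess i y *m S) (eps_u%:M)) ->
  let kappa := L / mu in
  let eps := eps_u / eps_d in
  eps < (1 + kappa^-1 + Num.sqrt ((1 + kappa^-1) ^+ 2 + 4 / kappa)) / 2 ->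
  eps_d^-1 * (1 - (eps * kappa)^-1) < eta -> eta < 2 / (eps_d + eps_u) ->
  exists rho : R, 0 <= rho < 1 /\
    forall m t, in_epoch sched m t ->
      enorm (x t.+1 - xstar) <= rho ^+ m * enorm (x 0%N - xstar).
Proof.
move=> f_C2 mu_gt0 mu_lt_L grad_mono xstar_min B_posdef _ x_update
  eps_d_gt0 eps_d_lt_u hess_B kappa eps _ eta_gt eta_lt.
(* The update reads B i t at time t. *)
have w_ge1 : 1 <= eps * kappa by apply: mul_ratio_ge1; rewrite ?ltW.
have eta_gt0 := stepsize_gt0 eps_d_gt0 w_ge1 eta_gt.
have eta_le : eta * (eps_u + eps_d) <= 2.
  by rewrite addrC -ler_pdivlMr ?ltW // addr_gt0 // (lt_trans eps_d_gt0).
have rho_lt1 := contraction_factor_lt1 eps_d_gt0 (lt_le_trans ltr01 w_ge1) eta_gt.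
exists ((1 - eta * eps_d) * (eps * kappa)); split.
  by rewrite rho_lt1 andbT mulr_ge0 ?(contraction_factor_ge0 eta_gt0 eps_d_lt_u eta_le)
    // (le_trans ler01 w_ge1).
apply: (@err_in_epoch _ _ sched (fun s => enorm (x s - xstar))); rewrite ?enorm_ge0 ?ltW //.
exact: (ldqn_step f_C2 mu_gt0 mu_lt_L grad_mono xstar_min B_posdef x_update
  eps_d_gt0 eps_d_lt_u hess_B eta_gt0 eta_le).
Qed.
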